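(* Let $T$ be a pre-truss and $P$ a left-closed normal sub-heap of $T$. If $P$ contains a left ideal of $T$, then $P$ is a left ideal of $T$.
   Context: A heap is a set with a ternary operation $[-,-,-]$ satisfying $[a_1,a_2,[a_3,a_4,a_5]]=[[a_1,a_2,a_3],a_4,a_5]$ and $[a,a,b]=b=[b,a,a]$. A pre-truss is a heap with an associative binary operation (juxtaposition). A normal sub-heap is a non-empty subset $S$ closed under $[-,-,-]$ with $[[a,e,s],a,e]\in S$ for all $a\in T$, $e,s\in S$. A sub-heap $S$ is left-closed if $[ts',ts,s]\in S$ for all $s,s'\in S$, $t\in T$. A left ideal is a normal sub-heap $I$ with $ti\in I$ for all $t\in T$, $i\in I$. *)

Record PreTruss := {
  carrier :> Type;
  br : carrier -> carrier -> carrier -> carrier;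
  mul : carrier -> carrier -> carrier;
  br_assoc : forall a1 a2 a3 a4 a5,
      br a1 a2 (br a3 a4 a5) = br (br a1 a2 a3) a4 a5;
  br_mal_l : forall a b, br a a b = b;
  br_mal_r : forall a b, br b a a = b;
  mul_assoc : forall a b c, mul a (mul b c) = mul (mul a b) c
}.

Section Defs.
Variable T : PreTruss.

Definition sub_heap (S : T -> Prop) : Prop :=
  (exists s, S s) /\
  (forall a b c, S a -> S b -> S c -> S (br T a b c)).

Definition normal_sub_heap (S : T -> Prop) : Prop :=
  sub_heap S /\
  (forall a e s, S e -> S s -> S (br T (br T a e s) a e)).

Definition left_closed (S : T -> Prop) : Prop :=
  forall s s' t, S s -> S s' -> S (br T (mul T t s') (mul T t s) s).

Definition left_ideal (I : T -> Prop) : Prop :=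
  normal_sub_heap I /\ (forall t i, I i -> I (mul T t i)).

End Defs.


(* If [i] lies in a left ideal inside [P], then for [p] in [P] the element
   [t p] is recovered as [[t p, t i, i], i, t i]: the first entry is in [P] by
   left-closedness, and [i], [t i] are in [P] because the ideal is. *)

Lemma br_brK (T : PreTruss) (a b c : T) : br T (br T a b c) c b = a.
Proof. now rewrite <- br_assoc, br_mal_l, br_mal_r. Qed.

Lemma left_closed_mul (T : PreTruss) (S : T -> Prop) (t s p : T) :
  sub_heap T S -> left_closed T S ->
  S s -> S (mul T t s) -> S p -> S (mul T t p).
Proof.
  intros [_ Sbr] Sleft Ss Sts Sp.
  rewrite <- (br_brK T (mul T t p) (mul T t s) s).
  apply Sbr; auto.
Qed.

Theorem lemma3p19 (T : PreTruss) (P : T -> Prop) :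
  normal_sub_heap T P -> left_closed T P ->
  (exists I : T -> Prop, left_ideal T I /\ (forall x, I x -> P x)) ->
  left_ideal T P.
Proof.
  intros Pnormal Pleft [I [[[[[i Ii] _] _] Imul] IP]].
  split; [exact Pnormal |].
  intros t p Pp.
  apply (left_closed_mul T P t i p); auto.
  apply Pnormal.
Qed.
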